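(* Let $r>2$ and fix $i_-$ with $1\le i_-\le r-1$; put $i_+=i_-+1$. Denote the generators of $H^e_{r+1}$ by $\check T_i$ ($i\in\mathbb Z/(r+1)\mathbb Z$) and $\check T_\rho^{\pm1}$. Then the assignment \[ T_i\mapsto\begin{cases}\check T_i & 1\le i<i_-,\\ \check T_{i_-}\check T_{i_+}\check T_{i_-}^{-1} & i=i_-,\\ \check T_{i+1} & i_+\le i\le r,\end{cases}\qquad T_\rho\mapsto \check T_{i_+}^{-1}\check T_\rho,\quad T_\rho^{-1}\mapsto \check T_\rho^{-1}\check T_{i_+} \] (where the generators $T_i$ of $H^e_r$ are indexed by $i\in\{1,\dots,r\}$ representing $\mathbb Z/r\mathbb Z$) extends to an injective $\mathcal A$-algebra homomorphism $\phi^e_v:H^e_r\to H^e_{r+1}$.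
   Context: $\mathcal A=\mathbb Z[v,v^{-1}]$. For $r>2$, the extended affine Hecke algebra $H^e_r$ of type A (Iwahori–Matsumoto presentation) is the associative unital $\mathcal A$-algebra with generators $T_i$ ($i\in\mathbb Z/r\mathbb Z$) and $T_\rho,T_\rho^{-1}$, subject to: $(T_i-v)(T_i+v^{-1})=0$; $T_iT_{i+1}T_i=T_{i+1}T_iT_{i+1}$; $T_iT_j=T_jT_i$ whenever $i-j\not\equiv\pm1\pmod r$; $T_\rho T_i=T_{i+1}T_\rho$; $T_\rho T_\rho^{-1}=T_\rho^{-1}T_\rho=1$ (all indices taken mod $r$). *)

From HB Require Import structures.
From mathcomp Require Import all_boot all_algebra.
Set Implicit Arguments. Unset Strict Implicit. Unset Printing Implicit Defensive.
Import GRing.Theory.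
Local Open Scope ring_scope.

(* Generating data for the extended affine Hecke algebra H^e_r, r = n.+1.
   The coefficient ring A = Z[v,v^-1] is encoded by a central unit v with
   inverse vi (an A-algebra structure on a ring R is exactly such a pair).
   Generators T_i, i in Z/rZ, are indexed by 'I_r (paper index r <-> 0). *)
Record hdata (R : pzRingType) (n : nat) := HData {
  hv : R; hvi : R; hT : 'I_n.+1 -> R; hrho : R; hrhoi : R }.

Definition om (n k : nat) : 'I_n.+1 := Ordinal (ltn_pmod k (ltn0Sn n)).

Definition hecke_rel (R : pzRingType) (n : nat) (g : hdata R n) : Prop :=
  hv g * hvi g = 1 /\ hvi g * hv g = 1 /\
  (forall x : R, hv g * x = x * hv g) /\ (forall x : R, hvi g * x = x * hvi g) /\
  (forall i, (hT g i - hv g) * (hT g i + hvi g) = 0) /\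
  (forall i : 'I_n.+1,
     hT g i * hT g (om n i.+1) * hT g i = hT g (om n i.+1) * hT g i * hT g (om n i.+1)) /\
  (forall i j : 'I_n.+1, j != om n i.+1 -> i != om n j.+1 ->
     hT g i * hT g j = hT g j * hT g i) /\
  (forall i : 'I_n.+1, hrho g * hT g i = hT g (om n i.+1) * hrho g) /\
  hrho g * hrhoi g = 1 /\ hrhoi g * hrho g = 1.

Definition hecke_gen_map (R S : pzRingType) (n : nat) (g : hdata R n) (g' : hdata S n)
  (f : R -> S) : Prop :=
  f (hv g) = hv g' /\ f (hvi g) = hvi g' /\ (forall i, f (hT g i) = hT g' i) /\
  f (hrho g) = hrho g' /\ f (hrhoi g) = hrhoi g'.

(* (H, g) is the algebra presented by generators and relations, i.e. it has
   the universal property of the presentation among A-algebras. *)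
Definition is_hecke (H : pzRingType) (n : nat) (g : hdata H n) : Prop :=
  hecke_rel g /\
  forall (B : pzRingType) (g' : hdata B n), hecke_rel g' ->
    (exists f : {rmorphism H -> B}, hecke_gen_map g g' f) /\
    (forall f1 f2 : {rmorphism H -> B},
        hecke_gen_map g g' f1 -> hecke_gen_map g g' f2 -> f1 =1 f2).

(* Write T'_i, T'_rho for the generators of H^e_(r+1).  Conjugation by phi(T_rho)
   shifts the images of the T_i cyclically, so the relations of H^e_r need only be
   checked at one index; the one new relation there is that T'_0 braids with
   T'_1 T'_2 T'_1^-1 (the case i_- = 1).

   Injectivity: H^e_(r+1) acts on the free right H^e_r-module with basis e_0, ..., e_r,
   giving psi : H^e_(r+1) -> M_(r+1)(H^e_r).  One checks psi (phi x) e_(i_-) = e_(i_-) x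
   on generators; an intertwining property that holds on generators holds everywhere,
   so x is the (i_-, i_-) entry of psi (phi x). *)

From HB Require Import structures.
From mathcomp Require Import all_boot all_algebra.
From mathcomp Require Import zify.
Set Implicit Arguments. Unset Strict Implicit. Unset Printing Implicit Defensive.
Import GRing.Theory.
Local Open Scope ring_scope.

Lemma om_ord n (i : 'I_n.+1) : om n i = i.
Proof. by apply/val_inj; rewrite /= modn_small. Qed.

Lemma om_modDl n a b : om n (om n a + b) = om n (a + b).
Proof. by apply/val_inj; rewrite /= modnDml. Qed.

Lemma om_succ n k : om n (om n k).+1 = om n k.+1.
Proof. by rewrite -[(om n k).+1]addn1 om_modDl addn1. Qed.

Lemma modn_succ n j : (j < n.+1)%N -> (j.+1 %% n.+1 = if j == n then 0 else j.+1)%N.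
Proof. by case: eqP => [->|ne lt]; rewrite ?modnn // modn_small //; lia. Qed.

Lemma om_nonadjacent n (i j : 'I_n.+1) :
  i != j -> j != om n i.+1 -> i != om n j.+1 ->
  exists2 k, (2 <= k <= n.-1)%N & j = om n (i + k).
Proof.
have neq_val (a b : 'I_n.+1) : a != b -> (a : nat) <> b.
  by move=> /eqP nab eab; apply: nab; apply: val_inj.
have lti := ltn_ord i; have ltj := ltn_ord j.
move=> /neq_val nij /neq_val /=; rewrite modn_succ // => hj /neq_val /=.
rewrite modn_succ //.
case: ((i : nat) =P n) hj; case: ((j : nat) =P n) => ? ? hj hi.
all: have [le_ij|lt_ji] := leqP i j.
all: try (exists (j - i)%N; first lia;
          by apply/val_inj; rewrite /= subnKC // modn_small).
all: exists (j + n.+1 - i)%N; first lia.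
all: apply/val_inj; rewrite /= addnBA; last lia.
all: by rewrite addnC addnK modnDr modn_small.
Qed.

Section RelationsFromOneIndex.
Variables (R : pzRingType) (n : nat) (g : hdata R n).
Local Notation T := (hT g).
Local Notation v := (hv g).
Local Notation vi := (hvi g).
Local Notation rho := (hrho g).
Local Notation rhoi := (hrhoi g).

Definition hecke_rel_at (i : 'I_n.+1) : Prop :=
  [/\ (T i - v) * (T i + vi) = 0,
      T i * T (om n i.+1) * T i = T (om n i.+1) * T i * T (om n i.+1) &
      forall k, (2 <= k <= n.-1)%N -> T i * T (om n (i + k)) = T (om n (i + k)) * T i].

Hypotheses (vvi : v * vi = 1) (viv : vi * v = 1)
  (vC : forall x : R, v * x = x * v) (viC : forall x : R, vi * x = x * vi)
  (rhoT : forall i : 'I_n.+1, rho * T i = T (om n i.+1) * rho)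
  (rhorhoi : rho * rhoi = 1) (rhoirho : rhoi * rho = 1).

Let c x := rho * x * rhoi.

Let cM x y : c (x * y) = c x * c y.
Proof. by rewrite /c !mulrA -[rho * x * rhoi * rho]mulrA rhoirho mulr1. Qed.

Let cB x y : c (x - y) = c x - c y.
Proof. by rewrite /c mulrBr mulrBl. Qed.

Let cD x y : c (x + y) = c x + c y.
Proof. by rewrite /c mulrDr mulrDl. Qed.

Let cT i : c (T i) = T (om n i.+1).
Proof. by rewrite /c rhoT -mulrA rhorhoi mulr1. Qed.

Let cC x : (forall y, x * y = y * x) -> c x = x.
Proof. by move=> xC; rewrite /c -xC -mulrA rhorhoi mulr1. Qed.

Lemma hecke_rel_atS i : hecke_rel_at i -> hecke_rel_at (om n i.+1).
Proof.
case=> quad braid comm; split.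
- by rewrite -cT -(cC vC) -(cC viC) -cB -cD -cM quad /c mulr0 mul0r.
- by rewrite -(cT i) -(cT (om n i.+1)) -!cM braid.
- move=> k hk; rewrite om_modDl addSn -[om n (i + k).+1]om_succ.
  by rewrite -(cT i) -(cT (om n (i + k))) -!cM comm.
Qed.

Lemma hecke_rel_at_shift b m : hecke_rel_at b -> hecke_rel_at (om n (b + m)).
Proof.
move=> hb; elim: m => [|m IH]; first by rewrite addn0 om_ord.
by rewrite addnS -om_succ; apply: hecke_rel_atS.
Qed.

Lemma hecke_rel_of_rel_at b : hecke_rel_at b -> hecke_rel g.
Proof.
move=> hb.
have all_at i : hecke_rel_at i.
  have -> : i = om n (b + (i + (n.+1 - b))).
    apply/val_inj; have := ltn_ord b; have := ltn_ord i => *.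
    by rewrite /= addnCA subnKC 1?ltnW // modnDr modn_small.
  exact: hecke_rel_at_shift.
do 4 (split; first by []).
split; first by move=> i; case: (all_at i).
split; first by move=> i; case: (all_at i).
split; last by [].
move=> i j hj hi; have [->//|nij] := eqVneq i j.
have [k hk ->] := om_nonadjacent nij hj hi.
by case: (all_at i) => _ _ ->.
Qed.

End RelationsFromOneIndex.

Definition map_hdata (R S : pzRingType) n (f : R -> S) (g : hdata R n) : hdata S n :=
  HData (f (hv g)) (f (hvi g)) (fun i => f (hT g i)) (f (hrho g)) (f (hrhoi g)).

Lemma hecke_rel_map (R S : pzRingType) n (f : {rmorphism R -> S}) (g : hdata R n) :
  hecke_rel g ->
  (forall x, f (hv g) * x = x * f (hv g)) -> (forall x, f (hvi g) * x = x * f (hvi g)) ->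
  hecke_rel (map_hdata f g).
Proof.
move=> [vvi [viv [_ [_ [quad [braid [comm [rhoT [rhorhoi rhoirho]]]]]]]]] vC viC.
rewrite /map_hdata /=; do ![split] => //.
- by rewrite -rmorphM vvi rmorph1.
- by rewrite -rmorphM viv rmorph1.
- by move=> i; rewrite -!rmorphB -!rmorphD -rmorphM quad rmorph0.
- by move=> i; rewrite -!rmorphM braid.
- by move=> i j hj hi; rewrite -!rmorphM comm.
- by move=> i; rewrite -!rmorphM rhoT.
- by rewrite -rmorphM rhorhoi rmorph1.
- by rewrite -rmorphM rhoirho rmorph1.
Qed.

Lemma hecke_morph_eq (H B : pzRingType) n (g : hdata H n) (f1 f2 : {rmorphism H -> B}) :
  is_hecke g ->
  (forall x, f1 (hv g) * x = x * f1 (hv g)) -> (forall x, f1 (hvi g) * x = x * f1 (hvi g)) ->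
  hecke_gen_map g (map_hdata f1 g) f2 -> f1 =1 f2.
Proof.
move=> [hg univ] vC viC; apply: (univ _ _ (hecke_rel_map hg vC viC)).2.
by do ![split].
Qed.

Lemma scalar_mx_central (S : pzRingType) m (a : S) (M : 'M[S]_m) :
  (forall y, a * y = y * a) -> a%:M *m M = M *m a%:M.
Proof.
move=> aC; apply/matrixP => i j.
rewrite mul_scalar_mx !mxE (bigD1 j) //= big1 ?addr0; first by rewrite !mxE eqxx mulr1n aC.
by move=> k /negbTE kj; rewrite !mxE kj mulr0n mulr0.
Qed.

Section UpperBlockMorphism.
Variables (R S : pzRingType) (m p : nat) (A : {rmorphism R -> 'M[S]_m})
  (B : {rmorphism R -> 'M[S]_p}) (E : 'M[S]_(m, p)).

(* The off-diagonal entry x |-> A x E - E B x is an (A, B)-derivation, which is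
   exactly what makes this map multiplicative. *)
Definition upper_block_mx (x : R) : 'M[S]_(m + p) :=
  block_mx (A x) (A x *m E - E *m B x) 0 (B x).

Fact upper_block_mx_nmod : nmod_morphism upper_block_mx.
Proof.
split; first by rewrite /upper_block_mx !rmorph0 mul0mx mulmx0 subrr block_mx0.
move=> x y; rewrite /upper_block_mx !rmorphD add_block_mx addr0.
by rewrite mulmxDl mulmxDr addrACA opprD.
Qed.

Fact upper_block_mx_monoid : monoid_morphism upper_block_mx.
Proof.
split; first by rewrite /upper_block_mx !rmorph1 mul1mx mulmx1 subrr -scalar_mx_block.
move=> x y; rewrite -mulmxE /upper_block_mx mulmx_block !rmorphM -!mulmxE.
rewrite !mulmx0 !mul0mx !addr0 !add0r mulmxBr mulmxBl !mulmxA.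
by rewrite addrA addrNK.
Qed.

HB.instance Definition _ :=
  GRing.isNmodMorphism.Build R 'M[S]_(m + p) upper_block_mx upper_block_mx_nmod.
HB.instance Definition _ :=
  GRing.isMonoidMorphism.Build R 'M[S]_(m + p) upper_block_mx upper_block_mx_monoid.

End UpperBlockMorphism.

(* The upper block morphisms built from E and from 0 agree on generators, hence
   everywhere by uniqueness; their off-diagonal blocks then agree. *)
Lemma hecke_intertwine (H S : pzRingType) n (g : hdata H n) m p
    (A : {rmorphism H -> 'M[S]_m}) (B : {rmorphism H -> 'M[S]_p}) (E : 'M[S]_(m, p))
    (c ci : S) :
  is_hecke g -> (forall y, c * y = y * c) -> (forall y, ci * y = y * ci) ->
  A (hv g) = c%:M -> B (hv g) = c%:M -> A (hvi g) = ci%:M -> B (hvi g) = ci%:M ->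
  let P x := A x *m E = E *m B x in
  [/\ P (hv g), P (hvi g), forall i, P (hT g i), P (hrho g) & P (hrhoi g)] ->
  forall x, P x.
Proof.
move=> ish cC ciC Av Bv Avi Bvi P [Pv Pvi PT Prho Prhoi].
have F0_diag y : upper_block_mx A B 0 y = block_mx (A y) 0 0 (B y).
  by rewrite /upper_block_mx mulmx0 mul0mx subrr.
have F0E y : P y -> upper_block_mx A B E y = upper_block_mx A B 0 y.
  by rewrite /P F0_diag /upper_block_mx => ->; rewrite subrr.
have F0_scalar a y : A y = a%:M -> B y = a%:M -> upper_block_mx A B 0 y = a%:M.
  by move=> Ay By; rewrite F0_diag Ay By -scalar_mx_block.
have F0_FE : upper_block_mx A B 0 =1 upper_block_mx A B E.
  apply: hecke_morph_eq ish _ _ _.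
  - by move=> M /=; rewrite (F0_scalar c) // -!mulmxE scalar_mx_central.
  - by move=> M /=; rewrite (F0_scalar ci) // -!mulmxE scalar_mx_central.
  - by do ![split]; try move=> i; apply: F0E.
move=> x; apply/eqP; rewrite -subr_eq0; apply/eqP.
by move: (F0_FE x); rewrite F0_diag /upper_block_mx => /eq_block_mx [_ <-].
Qed.

Definition hTn (R : pzRingType) n (g : hdata R n) j := hT g (om n j).
Definition hdelta (R : pzRingType) n (g : hdata R n) := hv g - hvi g.

Lemma hecke_quadE (S : pzRingType) (T v vi : S) : v * vi = 1 -> T * vi = vi * T ->
  (T - v) * (T + vi) = T * T - ((v - vi) * T + 1).
Proof.
by move=> vvi Tvi; rewrite mulrDr !mulrBl Tvi vvi !opprD opprK !addrA.
Qed.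

Section HeckeRelFacts.
Variables (H : pzRingType) (n : nat) (g : hdata H n) (hg : hecke_rel g).
Local Notation T := (hTn g).
Local Notation delta := (hdelta g).

Lemma hrho_mulV : hrho g * hrhoi g = 1.
Proof. by case: hg => _ [_ [_ [_ [_ [_ [_ [_ []]]]]]]]. Qed.

Lemma hrho_Vmul : hrhoi g * hrho g = 1.
Proof. by case: hg => _ [_ [_ [_ [_ [_ [_ [_ []]]]]]]]. Qed.

Lemma hTn_rho j : hrho g * T j = T j.+1 * hrho g.
Proof. by case: hg => _ [_ [_ [_ [_ [_ [_ [-> _]]]]]]]; rewrite om_succ. Qed.

Lemma hTn_mod : T n.+1 = T 0.
Proof. by rewrite /hTn /om; congr hT; apply/val_inj; rewrite /= modnn. Qed.

Lemma hdeltaC x : delta * x = x * delta.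
Proof. by case: hg => _ [_ [vC [viC _]]]; rewrite /hdelta mulrBl mulrBr vC viC. Qed.

Lemma hTn_sq j : T j * T j = delta * T j + 1.
Proof.
case: hg => vvi [_ [_ [viC [quad _]]]].
by apply/eqP; rewrite -subr_eq0 -hecke_quadE // quad.
Qed.

Lemma hTn_braid j : T j * T j.+1 * T j = T j.+1 * T j * T j.+1.
Proof. by case: hg => _ [_ [_ [_ [_ [braid _]]]]]; rewrite /hTn -om_succ braid. Qed.

Lemma hTn_comm j k : (j < n.+1)%N -> (k < n.+1)%N -> j <> k.+1 -> k <> j.+1 ->
  ~ (j = 0 /\ k = n)%N -> ~ (k = 0 /\ j = n)%N -> T j * T k = T k * T j.
Proof.
case: hg => _ [_ [_ [_ [_ [_ [comm _]]]]]] ltj ltk jk kj j0 k0.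
rewrite /hTn comm // -om_succ; apply/eqP => /(congr1 val) /=;
  rewrite !modn_succ ?modn_mod ?modn_small //; case: eqP; lia.
Qed.

Definition hTinv j := T j - delta.

Lemma hTn_mulV j : T j * hTinv j = 1.
Proof. by rewrite /hTinv mulrBr hTn_sq -hdeltaC addrAC subrr add0r. Qed.

Lemma hTn_Vmul j : hTinv j * T j = 1.
Proof. by rewrite /hTinv mulrBl hTn_sq addrAC subrr add0r. Qed.

Lemma hTinv_unique j t : T j * t = 1 -> t = hTinv j.
Proof. by move=> Tt; rewrite -[t]mul1r -(hTn_Vmul j) -mulrA Tt mulr1. Qed.

Lemma hTinv_rho j : hrho g * hTinv j = hTinv j.+1 * hrho g.
Proof. by rewrite /hTinv mulrBr mulrBl hTn_rho hdeltaC. Qed.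

Lemma hTinv_comm x j : x * T j = T j * x -> x * hTinv j = hTinv j * x.
Proof. by move=> xT; rewrite /hTinv mulrBr mulrBl xT hdeltaC. Qed.

Lemma hTn_braid_inv j : T j * T j.+1 * hTinv j = hTinv j.+1 * T j * T j.+1.
Proof.
rewrite -[LHS]mul1r -(hTn_Vmul j.+1) -!mulrA; congr (_ * _); rewrite !mulrA.
by rewrite -hTn_braid -[RHS]mulr1 -(hTn_mulV j) !mulrA.
Qed.

End HeckeRelFacts.

Definition ecol (H : pzRingType) N (z : nat) (h : H) : 'cV[H]_N :=
  \col_x (if (x : nat) == z then h else 0).

Lemma mul_ecol (H : pzRingType) N (A : 'M[H]_N.+1) z h x j : (z < N.+1)%N ->
  (A *m ecol N.+1 z h) x j = A x (inord z) * h.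
Proof.
move=> ltzN; rewrite mxE (bigD1 (inord z)) //= big1 ?mxE ?inordK ?eqxx ?addr0 //.
move=> w /negbTE wz; rewrite mxE.
by case: eqP => [ewz|_]; rewrite ?mulr0 //; move: wz; rewrite -ewz inord_val eqxx.
Qed.

Lemma mx_ecolP (H : pzRingType) N (A B : 'M[H]_N.+1) :
  (forall y h, (y < N.+1)%N -> A *m ecol N.+1 y h = B *m ecol N.+1 y h) -> A = B.
Proof.
move=> eAB; apply/matrixP => x y.
have := congr1 (fun M : 'cV[H]_N.+1 => M x 0) (eAB y 1 (ltn_ord y)).
by rewrite /= !mul_ecol // !mulr1 inord_val.
Qed.

Lemma scalar_mx_ecol (H : pzRingType) N (a : H) y h :
  a%:M *m ecol N y h = ecol N y (a * h).
Proof. by rewrite mul_scalar_mx; apply/matrixP => x j; rewrite !mxE; case: eqP; rewrite ?mulr0. Qed.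

Lemma ecol_scalar (H : pzRingType) N y (x : H) : ecol N y 1 *m x%:M = ecol N y x.
Proof.
apply/matrixP => a b; rewrite !mxE big_ord1 !mxE (ord1 b) eqxx mulr1n.
by case: eqP; rewrite ?mul1r ?mul0r.
Qed.

Section StrandRepresentation.
Variables (H : pzRingType) (n : nat) (g : hdata H n).
Local Notation N := n.+2.
Local Notation ecol := (ecol N).

(* Generators of H^e_(r+1) as (r + 1)-square matrices over H = H^e_r, acting on
   columns ecol y h = e_y h: e_y marks an extra strand at position y, and generators
   not involving that strand act through the matching generator of H^e_r. *)
Definition rho_mx : 'M[H]_N := \matrix_(x, y)
  if (y : nat) == n.+1 then (if (x : nat) == 0%N then 1 else 0)
  else if (x : nat) == y.+1 then hrho g else 0.
Definition rhoi_mx : 'M[H]_N := \matrix_(x, y)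
  if (y : nat) == 0%N then (if (x : nat) == n.+1 then 1 else 0)
  else if (x : nat).+1 == y then hrhoi g else 0.
Definition T_mx (k : nat) : 'M[H]_N := \matrix_(x, y)
  if (y : nat) == k.-1 then (if (x : nat) == k then 1 else 0)
  else if (y : nat) == k then
    (if (x : nat) == k.-1 then 1 else 0) + (if (x : nat) == k then hdelta g else 0)
  else if (x : nat) == y then (if (y < k.-1)%N then hTn g k.-1 else hTn g k) else 0.
Definition T0_mx : 'M[H]_N := \matrix_(x, y)
  if (y : nat) == n.+1 then (if (x : nat) == 0%N then hrhoi g else 0)
  else if (y : nat) == 0%N then
    (if (x : nat) == n.+1 then hrho g else 0) + (if (x : nat) == 0%N then hdelta g else 0)
  else if (x : nat) == y then hTn g 0 else 0.

Ltac ecol_entries := apply/matrixP => x j; rewrite mul_ecol; [|lia];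
  rewrite !mxE ?inordK; [|lia..];
  repeat (case: eqP => ? /=); repeat (case: ifP => ? /=);
  rewrite ?(mulr1, mul1r, mul0r, addr0, add0r, mulrDl) //; lia.

Lemma rho_mx_last y h : y = n.+1 -> rho_mx *m ecol y h = ecol 0 h.
Proof. by move=> ->; ecol_entries. Qed.
Lemma rho_mx_lt y h : (y < n.+1)%N -> rho_mx *m ecol y h = ecol y.+1 (hrho g * h).
Proof. by move=> ?; ecol_entries. Qed.
Lemma rhoi_mx_0 y h : y = 0%N -> rhoi_mx *m ecol y h = ecol n.+1 h.
Proof. by move=> ->; ecol_entries. Qed.
Lemma rhoi_mx_pos y h : (0 < y < N)%N -> rhoi_mx *m ecol y h = ecol y.-1 (hrhoi g * h).
Proof. by move=> ?; ecol_entries. Qed.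
Lemma T_mx_pred k y h : (0 < k < N)%N -> y = k.-1 -> T_mx k *m ecol y h = ecol k h.
Proof. by move=> ? ->; ecol_entries. Qed.
Lemma T_mx_self k y h : (0 < k < N)%N -> y = k ->
  T_mx k *m ecol y h = ecol k.-1 h + ecol k (hdelta g * h).
Proof. by move=> ? ->; ecol_entries. Qed.
Lemma T_mx_lt k y h : (y < k.-1)%N -> (k < N)%N -> T_mx k *m ecol y h = ecol y (hTn g k.-1 * h).
Proof. by move=> ? ?; ecol_entries. Qed.
Lemma T_mx_gt k y h : (k < y < N)%N -> T_mx k *m ecol y h = ecol y (hTn g k * h).
Proof. by move=> ?; ecol_entries. Qed.
Lemma T0_mx_last y h : y = n.+1 -> T0_mx *m ecol y h = ecol 0 (hrhoi g * h).
Proof. by move=> ->; ecol_entries. Qed.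
Lemma T0_mx_0 y h : y = 0%N -> T0_mx *m ecol y h = ecol n.+1 (hrho g * h) + ecol 0 (hdelta g * h).
Proof. by move=> ->; ecol_entries. Qed.
Lemma T0_mx_mid y h : (0 < y < n.+1)%N -> T0_mx *m ecol y h = ecol y (hTn g 0 * h).
Proof. by move=> ?; ecol_entries. Qed.

Definition hecke_mx (k : 'I_N) : 'M[H]_N := if (k : nat) == 0%N then T0_mx else T_mx k.
Definition mx_hdata : hdata 'M[H]_N n.+1 :=
  HData (hv g)%:M (hvi g)%:M hecke_mx rho_mx rhoi_mx.

Lemma hecke_mx_om k : (0 < k < N)%N -> hecke_mx (om n.+1 k) = T_mx k.
Proof. by move=> /andP [k0 kN]; rewrite /hecke_mx /= modn_small //; case: eqP => // ?; lia. Qed.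

End StrandRepresentation.

Ltac mx_act g := repeat match goal with
  | |- context [?A *m (?B + ?C)] => rewrite (mulmxDr A B C)
  | |- context [?A *m (?B - ?C)] => rewrite (mulmxBr A B C)
  | |- context [?A *m (- ?B)] => rewrite (mulmxN A B)
  | |- context [(?B - ?C) *m ?A] => rewrite (mulmxBl B C A)
  | |- context [?a%:M *m ecol _ ?y ?h] => rewrite (scalar_mx_ecol _ a y h)
  | |- context [rho_mx g *m ecol _ ?y ?h] =>
      first [rewrite (@rho_mx_last _ _ g y h); [|lia] | rewrite (@rho_mx_lt _ _ g y h); [|lia]]
  | |- context [rhoi_mx g *m ecol _ ?y ?h] =>
      first [rewrite (@rhoi_mx_0 _ _ g y h); [|lia] | rewrite (@rhoi_mx_pos _ _ g y h); [|lia]]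
  | |- context [T0_mx g *m ecol _ ?y ?h] =>
      first [rewrite (@T0_mx_last _ _ g y h); [|lia] | rewrite (@T0_mx_0 _ _ g y h); [|lia]
            | rewrite (@T0_mx_mid _ _ g y h); [|lia]]
  | |- context [T_mx g ?k *m ecol _ ?y ?h] =>
      first [rewrite (@T_mx_pred _ _ g k y h); [|lia|lia] | rewrite (@T_mx_self _ _ g k y h); [|lia|lia]
            | rewrite (@T_mx_lt _ _ g k y h); [|lia|lia] | rewrite (@T_mx_gt _ _ g k y h); [|lia]]
  end.

Section StrandRepresentationRelations.
Variables (H : pzRingType) (n : nat) (g : hdata H n) (hg : hecke_rel g) (n2 : (2 <= n)%N).
Local Notation N := n.+2.
Local Notation rho_mx := (rho_mx g).
Local Notation rhoi_mx := (rhoi_mx g).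
Local Notation T_mx := (T_mx g).
Local Notation T0_mx := (T0_mx g).

Ltac split_at y a := let c := fresh "c" in have [c|c|c] := ltngtP y a.

Ltac mx_entries := apply/matrixP => x j; rewrite !mxE; repeat (case: eqP => ? /=); try lia;
  rewrite ?(addr0, add0r, mulr0, mul0r, mulr1, mul1r).

Ltac hecke_simp := rewrite ?mulrA ?(hTn_rho hg) ?(hTn_mod g) ?(hrho_mulV hg) ?(hrho_Vmul hg)
  ?mul1r ?prednK //; try (by rewrite (hdeltaC hg)); try lia.

Lemma rho_mx_T_mx k : (0 < k <= n)%N -> rho_mx *m T_mx k = T_mx k.+1 *m rho_mx.
Proof.
move=> hk; apply: mx_ecolP => y h hy; rewrite -!mulmxA.
split_at y k.-1; split_at y k; split_at y n.+1; try lia.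
all: mx_act g; mx_entries; hecke_simp.
Qed.

Lemma rho_mx_T0_mx : rho_mx *m T0_mx = T_mx 1 *m rho_mx.
Proof.
apply: mx_ecolP => y h hy; rewrite -!mulmxA.
split_at y 0%N; split_at y n.+1; try lia.
all: mx_act g; mx_entries; hecke_simp.
Qed.

Lemma rho_mx_T_mx_last : rho_mx *m T_mx n.+1 = T0_mx *m rho_mx.
Proof.
apply: mx_ecolP => y h hy; rewrite -!mulmxA.
split_at y n; split_at y n.+1; try lia.
all: mx_act g; mx_entries; hecke_simp.
Qed.

Lemma rho_mx_mulV : rho_mx *m rhoi_mx = 1%:M.
Proof.
apply: mx_ecolP => y h hy; rewrite -!mulmxA mul1mx.
split_at y 0%N; try lia.
all: mx_act g; mx_entries; hecke_simp.
Qed.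

Lemma rho_mx_Vmul : rhoi_mx *m rho_mx = 1%:M.
Proof.
apply: mx_ecolP => y h hy; rewrite -!mulmxA mul1mx.
split_at y n.+1; try lia.
all: mx_act g; mx_entries; hecke_simp.
Qed.

Lemma T_mx1_sq : T_mx 1 *m T_mx 1 = (hdelta g)%:M *m T_mx 1 + 1%:M.
Proof.
apply: mx_ecolP => y h hy; rewrite -!mulmxA mulmxDl mul1mx -mulmxA.
split_at y 0%N; split_at y 1%N; try lia.
all: mx_act g; mx_entries; hecke_simp.
- by rewrite (hTn_sq hg) mulrDl mul1r.
- by rewrite addrC.
Qed.

Lemma T_mx_braid12 : T_mx 1 *m T_mx 2 *m T_mx 1 = T_mx 2 *m T_mx 1 *m T_mx 2.
Proof.
apply: mx_ecolP => y h hy; rewrite -!mulmxA.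
split_at y 0%N; split_at y 1%N; split_at y 2%N; try lia.
all: mx_act g; mx_entries; hecke_simp.
- by rewrite (hTn_braid hg 1).
- rewrite -(hdeltaC hg (hTn g 1)) -(mulrA (hdelta g)) (hTn_sq hg) mulrDr mulr1 mulrDl addrC.
  by congr (_ + _); rewrite -(mulrA _ (hTn g 1)) -(hdeltaC hg) !mulrA.
Qed.

Lemma T_mx_comm1 k : (3 <= k <= n.+1)%N -> T_mx 1 *m T_mx k = T_mx k *m T_mx 1.
Proof.
move=> hk; apply: mx_ecolP => y h hy; rewrite -!mulmxA.
split_at y 0%N; split_at y 1%N; split_at y k.-1; split_at y k; try lia.
all: mx_act g; mx_entries; hecke_simp.
all: by rewrite (hTn_comm hg) //; lia.
Qed.

Lemma mx_hecke_rel : hecke_rel (mx_hdata g).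
Proof.
have [vvi [viv [vC [viC _]]]] := hg.
have scalarC a : (forall y, a * y = y * a) -> forall M : 'M[H]_N, a%:M * M = M * a%:M.
  by move=> aC M; rewrite -!mulmxE scalar_mx_central.
apply: (@hecke_rel_of_rel_at _ _ (mx_hdata g) _ _ _ _ _ _ _ (om n.+1 1)) => /=.
- by rewrite -mulmxE -scalar_mxM vvi.
- by rewrite -mulmxE -scalar_mxM viv.
- exact: scalarC.
- exact: scalarC.
- move=> i; rewrite -!mulmxE /hecke_mx /= modn_succ ?ltn_ord //.
  have := ltn_ord i; case: ((i : nat) =P 0%N) => [-> _|i0 ltiN] /=.
    exact: rho_mx_T0_mx.
  case: ((i : nat) =P n.+1) => [->|in1] /=; first exact: rho_mx_T_mx_last.
  by rewrite rho_mx_T_mx //; lia.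
- by rewrite -mulmxE rho_mx_mulV.
- by rewrite -mulmxE rho_mx_Vmul.
- rewrite /hecke_rel_at /= [(1 %% N)%N]modn_small // (@hecke_mx_om _ _ g 1) // hecke_mx_om; last lia.
  split.
  + rewrite hecke_quadE; last by rewrite scalarC.
      by rewrite -!mulmxE T_mx1_sq /hdelta raddfB subrr.
    by rewrite -mulmxE -scalar_mxM vvi.
  + by rewrite -!mulmxE T_mx_braid12.
  + move=> k hk; rewrite hecke_mx_om; last lia.
    by rewrite -!mulmxE T_mx_comm1 //; lia.
Qed.

End StrandRepresentationRelations.

Lemma braid_conj (S : pzRingType) (a b c bi ci : S) :
  b * bi = 1 -> c * ci = 1 -> ci * c = 1 ->
  a * b * a = b * a * b -> b * c * b = c * b * c -> a * c = c * a ->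
  a * (b * c * bi) * a = (b * c * bi) * a * (b * c * bi).
Proof.
move=> bbi cci cic aba bcb ac.
have -> : b * c * bi = ci * b * c.
  transitivity (ci * (c * b * c) * bi); first by rewrite !mulrA cic mul1r.
  by rewrite -bcb !mulrA -(mulrA _ b bi) bbi mulr1.
have aci : a * ci = ci * a.
  transitivity (ci * (c * a) * ci); first by rewrite !mulrA cic mul1r.
  by rewrite -ac -!mulrA cci mulr1.
transitivity (ci * (a * b * a) * c).
  by rewrite !mulrA aci -(mulrA _ c a) -ac !mulrA.
by rewrite aba !mulrA -(mulrA _ a ci) aci mulrA -(mulrA _ c ci) cci mulr1.
Qed.

Section PhiImages.
Variables (H' : pzRingType) (n : nat) (g' : hdata H' n.+1) (hg' : hecke_rel g')
  (n2 : (2 <= n)%N) (im : nat) (him : (1 <= im <= n)%N).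
Local Notation U := (hTn g').
Local Notation Ui := (hTinv g').
Local Notation rho := (hrho g').
Local Notation rhoi := (hrhoi g').

Definition phi_X := U im * U im.+1 * Ui im.

(* Index 0 stands for r, whose image U (r + 1) = U 0 is produced by the first branch. *)
Definition phi_T (i : 'I_n.+1) : H' :=
  if (i < im)%N then U i else if (i : nat) == im then phi_X else U i.+1.
Definition phi_rho := Ui im.+1 * rho.
Definition phi_rhoi := rhoi * U im.+1.
Definition phi_hdata : hdata H' n := HData (hv g') (hvi g') phi_T phi_rho phi_rhoi.

Lemma phi_T_om j : (j <= n.+1)%N ->
  phi_T (om n j) = if (j < im)%N then U j else if j == im then phi_X else U j.+1.
Proof.
rewrite /phi_T leq_eqVlt => /orP [/eqP ->|ltj]; last by rewrite /= modn_small.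
by rewrite /= modnn (hTn_mod g') ifT 1?ifF 1?ifF //; lia.
Qed.

Lemma phi_rho_U j : U j.+1 * Ui im.+1 = Ui im.+1 * U j.+1 -> phi_rho * U j = U j.+1 * phi_rho.
Proof. by move=> UUi; rewrite /phi_rho -mulrA (hTn_rho hg') !mulrA UUi. Qed.

Lemma phi_rho_T i : phi_rho * phi_T i = phi_T (om n i.+1) * phi_rho.
Proof.
have lti := ltn_ord i.
rewrite -{1}[i]om_ord !phi_T_om //; last lia.
have UiC j : (0 < j <= n.+2)%N -> j <> im -> j <> im.+2 -> (j = n.+2 -> im <> n) ->
    U j * Ui im.+1 = Ui im.+1 * U j.
  move=> hj jim jim2 jn; apply: (hTinv_comm hg').
  have [ejn|nejn] := eqVneq j n.+2; first by rewrite ejn (hTn_mod g'); apply: (hTn_comm hg'); lia.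
  by apply: (hTn_comm hg'); lia.
have push j x : rho * (U j * x) = U j.+1 * (rho * x) by rewrite !mulrA (hTn_rho hg').
have [lt_im|gt_im|eq_im] := ltngtP i.+1 im.
- by rewrite phi_rho_U //; apply: UiC; lia.
- have [->|ne_im] := eqVneq (i : nat) im; last by rewrite phi_rho_U //; apply: UiC; lia.
  rewrite /phi_rho /phi_X -!mulrA !push (hTinv_rho hg') !mulrA (hTn_Vmul hg').
  by rewrite mul1r.
- rewrite /phi_X (hTn_braid_inv hg') /phi_rho -!mulrA (hTn_rho hg') eq_im.
  by rewrite [U im.+1 * _]mulrA (hTn_mulV hg') mul1r.
Qed.

Lemma phi_hecke_rel : hecke_rel phi_hdata.
Proof.
have [vvi [viv [vC [viC [quad _]]]]] := hg'.
have phi_T0 : phi_T ord0 = U 0 by rewrite /phi_T /= ifT //; lia.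
apply: (@hecke_rel_of_rel_at _ _ phi_hdata vvi viv vC viC phi_rho_T _ _ ord0) => /=.
- by rewrite /phi_rho /phi_rhoi -!mulrA (mulrA rho) (hrho_mulV hg') mul1r (hTn_Vmul hg').
- by rewrite /phi_rhoi /phi_rho -!mulrA (mulrA (U im.+1)) (hTn_mulV hg') mul1r (hrho_Vmul hg').
rewrite /hecke_rel_at /=; split; rewrite phi_T0.
- exact: quad.
- rewrite phi_T_om; last lia.
  case: ltnP => [_|le_im]; first exact: (hTn_braid hg').
  have im1 : im = 1%N by lia.
  rewrite /phi_X im1 eqxx; apply: (braid_conj (ci := Ui 2)).
  all: try exact: (hTn_mulV hg'); try exact: (hTn_Vmul hg'); try exact: (hTn_braid hg').
  by apply: (hTn_comm hg'); lia.
- move=> k hk; rewrite add0n phi_T_om; last lia.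
  case: ltnP => _; first by apply: (hTn_comm hg'); lia.
  case: eqP => [eq_k|_]; last by apply: (hTn_comm hg'); lia.
  have U0C j : (1 < j < n.+1)%N -> U 0 * U j = U j * U 0 by move=> ?; apply: (hTn_comm hg'); lia.
  apply: commrM; first apply: commrM; try apply: (hTinv_comm hg'); apply: U0C; lia.
Qed.

End PhiImages.

Section PhiInjective.
Variables (n : nat) (n2 : (2 <= n)%N) (im : nat) (him : (1 <= im <= n)%N)
  (H : pzRingType) (g : hdata H n) (ish : is_hecke g) (H' : pzRingType) (g' : hdata H' n.+1)
  (f : {rmorphism H -> H'}) (hf : hecke_gen_map g (phi_hdata g' im) f)
  (psi : {rmorphism H' -> 'M[H]_n.+2}) (hpsi : hecke_gen_map g' (mx_hdata g) psi).
Local Notation ecol := (ecol n.+2).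

Lemma psi_hTn j : (0 < j < n.+2)%N -> psi (hTn g' j) = T_mx g j.
Proof. by case: hpsi => _ [_ [pT _]] hj; rewrite /hTn pT /= hecke_mx_om. Qed.

Lemma psi_hTn0 : psi (hTn g' 0) = T0_mx g.
Proof. by case: hpsi => _ [_ [pT _]]; rewrite /hTn pT. Qed.

Lemma psi_hTinv j : psi (hTinv g' j) = psi (hTn g' j) - (hdelta g)%:M.
Proof. by case: hpsi => /= pv [pvi _]; rewrite /hTinv /hdelta !rmorphB pv pvi raddfB. Qed.

Lemma psi_phi_ecol x : psi (f x) *m ecol im 1 = ecol im x.
Proof.
have [_ [_ [vC [viC _]]]] := ish.1.
have [fv [fvi [fT [frho frhoi]]]] := hf.
have [pv [pvi [_ [prho prhoi]]]] := hpsi.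
rewrite /= in fv fvi fT frho frhoi pv pvi prho prhoi.
rewrite -[ecol im x]ecol_scalar; move: x.
pose A : {rmorphism H -> 'M[H]_n.+2} := psi \o f.
pose B : {rmorphism H -> 'M[H]_1} := @scalar_mx H 1.
apply: (hecke_intertwine (A := A) (B := B) ish vC viC); rewrite /A /B /= ?fv ?fvi ?pv ?pvi //.
split; rewrite ?ecol_scalar ?scalar_mx_ecol ?mulr1 //.
- move=> i; rewrite ecol_scalar fT /phi_T; have lti := ltn_ord i.
  have hTnE j : j = i :> nat -> hTn g j = hT g i by move=> ->; rewrite /hTn om_ord.
  case: ltnP => [lt_im|ge_im].
    have [i0|i0] := eqVneq (i : nat) 0%N.
      by rewrite i0 psi_hTn0; mx_act g; rewrite mulr1 hTnE.
    by rewrite psi_hTn; last lia; mx_act g; rewrite mulr1 hTnE.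
  case: eqP => [eq_im|ne_im].
    rewrite /phi_X !rmorphM psi_hTinv !psi_hTn; try lia.
    by rewrite -!mulmxE -!mulmxA; mx_act g; rewrite addrK mulr1 hTnE // eq_im.
  by rewrite psi_hTn; last lia; mx_act g; rewrite mulr1 hTnE.
- rewrite frho /phi_rho rmorphM psi_hTinv prho psi_hTn; last lia.
  by rewrite -mulmxE -mulmxA; mx_act g; rewrite addrK mulr1.
- rewrite frhoi /phi_rhoi rmorphM prhoi psi_hTn; last lia.
  by rewrite -mulmxE -mulmxA; mx_act g; rewrite mulr1.
Qed.

Lemma phi_injective : injective f.
Proof.
move=> x y fxy; have := psi_phi_ecol x; rewrite fxy psi_phi_ecol.
move=> /(congr1 (fun M : 'cV[H]_n.+2 => M (inord im) 0)).
by rewrite !mxE inordK ?eqxx //; lia.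
Qed.

End PhiInjective.

Theorem mainTheorem8 (n : nat) (hr : (2 < n.+1)%N) (im : nat) (him : (1 <= im <= n)%N)
  (H : pzRingType) (g : hdata H n) (H' : pzRingType) (g' : hdata H' n.+1) :
  is_hecke g -> is_hecke g' ->
  exists f : {rmorphism H -> H'},
    injective f /\
    f (hv g) = hv g' /\ f (hvi g) = hvi g' /\
    (forall i : nat, (1 <= i < im)%N -> f (hT g (om n i)) = hT g' (om n.+1 i)) /\
    (forall t : H', hT g' (om n.+1 im) * t = 1 -> t * hT g' (om n.+1 im) = 1 ->
       f (hT g (om n im)) = hT g' (om n.+1 im) * hT g' (om n.+1 im.+1) * t) /\
    (forall i : nat, (im.+1 <= i <= n.+1)%N -> f (hT g (om n i)) = hT g' (om n.+1 i.+1)) /\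
    (forall t : H', hT g' (om n.+1 im.+1) * t = 1 -> t * hT g' (om n.+1 im.+1) = 1 ->
       f (hrho g) = t * hrho g') /\
    f (hrhoi g) = hrhoi g' * hT g' (om n.+1 im.+1).
Proof.
move=> ish ish'; have n2 : (2 <= n)%N by lia.
have [[f hf] _] := ish.2 _ _ (phi_hecke_rel ish'.1 n2 him).
have [[psi hpsi] _] := ish'.2 _ _ (mx_hecke_rel ish.1 n2).
have [fv [fvi [fT [frho frhoi]]]] := hf; rewrite /= in fv fvi fT frho frhoi.
exists f; split; first by move=> x y; apply: (phi_injective n2 him ish hf hpsi).
do ![split] => //.
- by move=> i hi; rewrite fT phi_T_om ?ifT //; lia.
- move=> t /(hTinv_unique ish'.1) -> _.
  by rewrite fT phi_T_om ?ltnn ?eqxx //; lia.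
- by move=> i hi; rewrite fT phi_T_om ?ifF //; lia.
- by move=> t /(hTinv_unique ish'.1) -> _; rewrite frho.
Qed.
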